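(* Let $\mathscr{M}$ be a finite rooted transition system in which every state is reachable from the initial state (connected, reachable). Let $\mathrm{Lind}$ be the Lindenbaum algebra of the propositional geometric theory $\mathbb{T}$ whose atoms are $\Delta(s,t)$ for states $s,t$ and whose axioms are $\Delta(s,t)\vdash\bot$ whenever $s\not\to t$, and $\top\vdash\bigvee_{t:\,s\to t}\Delta(s,t)$ for every state $s$ having at least one successor. Let $\mathrm{Aut}(\mathrm{graph})$ be the group of permutations $\sigma$ of the states with $s\to t\iff\sigma(s)\to\sigma(t)$, and let $\varphi:\mathrm{Aut}(\mathrm{graph})\to\mathrm{Aut}(\mathrm{Lind})$ be the group homomorphism induced by the atom permutation $\Delta(s,t)\mapsto\Delta(\sigma(s),\sigma(t))$. Then either $\ker\varphi$ is trivial or $\ker\varphi=\mathrm{Aut}(\mathrm{graph})$. Specifically, $\ker\varphi$ is trivial whenever some state has at least two successors, and $\ker\varphi=\mathrm{Aut}(\mathrm{graph})$ when every state has at most one successor.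
   Context: The Lindenbaum algebra of a propositional geometric theory is the frame presented by the atoms as generators, modulo the relations induced by the axioms (the quotient of the free frame on the atoms). *)

From mathcomp Require Import all_boot all_fingroup.
Set Implicit Arguments. Unset Strict Implicit. Unset Printing Implicit Defensive.

Inductive gform (A : Type) : Type :=
| gAtom : A -> gform A
| gTop : gform A
| gConj : gform A -> gform A -> gform A
| gDisj : forall J : Type, (J -> gform A) -> gform A.

Arguments gTop {A}.

Definition gBot {A : Type} : gform A := @gDisj A void (fun v => match v with end).

Fixpoint gmap (A B : Type) (f : A -> B) (p : gform A) : gform B :=
  match p with
  | gAtom a => gAtom (f a)
  | gTop => gTop
  | gConj p q => gConj (gmap f p) (gmap f q)
  | @gDisj _ J g => @gDisj B J (fun i => gmap f (g i))
  end.

(** Derivability of sequents [p |- q] in propositional geometric logic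
    (Johnstone, Elephant D1.3.1) relative to a theory [ax] (a set of
    axiom sequents). *)
Inductive gder (A : Type) (ax : gform A -> gform A -> Prop)
  : gform A -> gform A -> Prop :=
| gd_ax p q : ax p q -> gder ax p q
| gd_refl p : gder ax p p
| gd_cut p q r : gder ax p q -> gder ax q r -> gder ax p r
| gd_top p : gder ax p gTop
| gd_conjE1 p q : gder ax (gConj p q) p
| gd_conjE2 p q : gder ax (gConj p q) q
| gd_conjI p q r : gder ax p q -> gder ax p r -> gder ax p (gConj q r)
| gd_disjI (J : Type) (f : J -> gform A) (i : J) : gder ax (f i) (gDisj f)
| gd_disjE (J : Type) (f : J -> gform A) r :
    (forall i, gder ax (f i) r) -> gder ax (gDisj f) r
| gd_distr p (J : Type) (f : J -> gform A) :
    gder ax (gConj p (gDisj f)) (gDisj (fun i => gConj p (f i))).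

(** Provable equivalence: equality in the Lindenbaum algebra. *)
Definition gequiv (A : Type) (ax : gform A -> gform A -> Prop) (p q : gform A) :=
  gder ax p q /\ gder ax q p.

(** * The theory T of a transition system [e : rel S].
    Atoms are pairs [(s, t)] standing for Delta(s,t). *)
Inductive T_axiom (S : finType) (e : rel S) :
  gform (S * S) -> gform (S * S) -> Prop :=
| T_nonedge (s t : S) : ~~ e s t -> T_axiom e (gAtom (s, t)) gBot
| T_succ (s : S) : (exists t, e s t) ->
    T_axiom e gTop (gDisj (fun t : {t : S | e s t} => gAtom (s, sval t))).

Definition graph_aut (S : finType) (e : rel S) (sigma : {perm S}) : Prop :=
  forall s t, e s t = e (sigma s) (sigma t).

Definition atom_perm (S : finType) (sigma : {perm S}) (a : S * S) : S * S :=
  (sigma a.1, sigma a.2).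

(** [sigma] lies in the kernel of phi : Aut(graph) -> Aut(Lind) iff the
    induced automorphism [ [p] |-> [sigma . p] ] of the Lindenbaum algebra
    is the identity, i.e. every formula is provably equivalent to its image. *)
Definition in_ker_phi (S : finType) (e : rel S) (sigma : {perm S}) : Prop :=
  forall p : gform (S * S), gequiv (T_axiom e) (gmap (atom_perm sigma) p) p.

Definition succs (S : finType) (e : rel S) (s : S) : {set S} := [set t | e s t].

From mathcomp Require Import all_boot all_fingroup.
From mathcomp Require Import zify.
Set Implicit Arguments. Unset Strict Implicit. Unset Printing Implicit Defensive.

(* Triviality of the kernel is detected by models of T: a model picks one
   successor for each state that has one, and a kernel element sigma must
   send true atoms to true atoms, so sigma commutes with every choice of
   successors.  Hence sigma fixes every successor of a fixed state and every
   branching state.  Its non-fixed states therefore have at most one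
   successor and, by reachability, each of them but the root is the successor
   of another one; counting shows that at most one of them has a fixed
   successor, whereas an exit edge x -> y from the non-fixed states yields
   the two such states x and sigma x.
   When no state branches, every atom is provably top or bottom according
   to whether it is an edge, and graph automorphisms preserve edges. *)

Fixpoint geval (A : Type) (v : A -> Prop) (p : gform A) : Prop :=
  match p with
  | gAtom a => v a
  | gTop => True
  | gConj p q => geval v p /\ geval v q
  | @gDisj _ J g => exists j : J, geval v (g j)
  end.

Section GeometricLogic.

Variables (A : Type) (ax : gform A -> gform A -> Prop).

Lemma gder_sound (v : A -> Prop) :
    (forall p q, ax p q -> geval v p -> geval v q) ->
  forall p q, gder ax p q -> geval v p -> geval v q.
Proof.
move=> axP p q; elim=> {p q} /=.
- exact: axP.
- by [].
- by move=> p q r _ pq _ qr /pq /qr.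
- by [].
- by move=> p q [].
- by move=> p q [].
- by move=> p q r _ pq _ pr vp; split; [apply: pq | apply: pr].
- by move=> J f i vi; exists i.
- by move=> J f r _ fr [i /fr].
- by move=> p J f [vp [i vi]]; exists i.
Qed.

Lemma gder_bot q : gder ax gBot q.
Proof. by apply: gd_disjE => -[]. Qed.

Lemma gder_conj p p' q q' :
  gder ax p p' -> gder ax q q' -> gder ax (gConj p q) (gConj p' q').
Proof.
move=> pp' qq'; apply: gd_conjI.
- exact: gd_cut (gd_conjE1 _ _ _) pp'.
- exact: gd_cut (gd_conjE2 _ _ _) qq'.
Qed.

Lemma gder_disj (J : Type) (f g : J -> gform A) :
  (forall i, gder ax (f i) (g i)) -> gder ax (gDisj f) (gDisj g).
Proof. by move=> fg; apply: gd_disjE => i; apply: gd_cut (fg i) (gd_disjI _ _ _). Qed.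

Lemma gequiv_sym p q : gequiv ax p q -> gequiv ax q p.
Proof. by case. Qed.

Lemma gequiv_trans p q r : gequiv ax p q -> gequiv ax q r -> gequiv ax p r.
Proof. by move=> [pq qp] [qr rq]; split; apply: gd_cut; eassumption. Qed.

Lemma gequiv_gmap (f : A -> A) :
  (forall a, gequiv ax (gAtom (f a)) (gAtom a)) ->
  forall p, gequiv ax (gmap f p) p.
Proof.
move=> fE; elim=> /= [a | | p [pE Ep] q [qE Eq] | J g gE].
- exact: fE.
- by split; apply: gd_refl.
- by split; apply: gder_conj.
- by split; apply: gder_disj => i; case: (gE i).
Qed.

End GeometricLogic.

Section ModelsOfT.

Variables (S : finType) (e : rel S).

Definition succ_choice (f : S -> S) := forall s t, e s t -> e s (f s).

Definition choice_val (f : S -> S) (a : S * S) : Prop := e a.1 a.2 && (f a.1 == a.2).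

Lemma succ_choice_default : succ_choice (fun s => odflt s [pick t | e s t]).
Proof. by move=> s t est; case: pickP => [//|/(_ t)]; rewrite est. Qed.

Lemma succ_choice_with f s t :
  succ_choice f -> e s t -> succ_choice [eta f with s |-> t].
Proof. by move=> fP est u v euv /=; case: eqP => [->|_]; [| exact: fP euv]. Qed.

Lemma choice_val_T_axiom f :
  succ_choice f ->
  forall p q, T_axiom e p q -> geval (choice_val f) p -> geval (choice_val f) q.
Proof.
move=> fP p q [s t nst | s [t est]] /=.
  by rewrite /choice_val /= (negbTE nst).
by move=> _; exists (exist _ (f s) (fP _ _ est)); rewrite /choice_val /= (fP _ _ est) eqxx.
Qed.

Variable sigma : {perm S}.
Hypothesis ker : in_ker_phi e sigma.

Lemma ker_phi_succ_choice f :
  succ_choice f -> forall s, e s (f s) -> f (sigma s) = sigma (f s).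
Proof.
move=> fP s esf; have [_ D] := ker (gAtom (s, f s)).
have := gder_sound (choice_val_T_axiom fP) D.
by rewrite /= /choice_val /= esf eqxx => /(_ isT) /andP [_ /eqP].
Qed.

Lemma ker_phi_fix_succ s t : e s t -> sigma s = s -> sigma t = t.
Proof.
move=> est fix_s.
have := ker_phi_succ_choice (succ_choice_with succ_choice_default est) (s := s).
by rewrite /= fix_s eqxx => /(_ est).
Qed.

Hypothesis aut : graph_aut e sigma.

Lemma ker_phi_fix_branch s : 1 < #|succs e s| -> sigma s = s.
Proof.
case/card_gt1P => a [c []]; rewrite !inE => esa esc neq_ac.
apply/eqP; apply: contraT => move_s.
have esc' : e (sigma s) (sigma c) by rewrite -aut.
have fP := succ_choice_with (succ_choice_with succ_choice_default esc') esa.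
have := ker_phi_succ_choice fP (s := s).
rewrite /= eqxx (negbTE move_s) eqxx => /(_ esa) /perm_inj eq_ca.
by rewrite eq_ca eqxx in neq_ac.
Qed.

End ModelsOfT.

Section NonBranching.

Variables (S : finType) (e : rel S).
Hypothesis nonbranching : forall s, #|succs e s| <= 1.

Lemma atom_gequiv_edge s t :
  gequiv (T_axiom e) (gAtom (s, t)) (if e s t then gTop else gBot).
Proof.
case: ifPn => [est | nst]; split.
- exact: gd_top.
- apply: gd_cut (gd_ax (T_succ (ex_intro _ t est))) _.
  apply: gd_disjE => -[t' est'] /=.
  have /card_le1_eqP eq_t := nonbranching s.
  by rewrite (eq_t t' t) ?inE //; apply: gd_refl.
- exact: gd_cut (gd_ax (T_nonedge nst)) (gder_bot _ _).
- exact: gder_bot.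
Qed.

Lemma graph_aut_in_ker_phi sigma : graph_aut e sigma -> in_ker_phi e sigma.
Proof.
move=> aut; apply: gequiv_gmap => -[s t].
apply: gequiv_trans (atom_gequiv_edge _ _) _.
by rewrite /= -aut; apply/gequiv_sym/atom_gequiv_edge.
Qed.

End NonBranching.

Lemma connect_exit (T : finType) (e : rel T) (A : {pred T}) x y :
  connect e x y -> x \in A -> y \notin A ->
  exists u v, [/\ u \in A, v \notin A & e u v].
Proof.
case/connectP=> p + ->; elim: p x => [|z p IH] x /=; first by move=> _ ->.
case/andP=> exz zp xA pA; have [zA | zNA] := boolP (z \in A).
- exact: IH zp zA pA.
- by exists x, z.
Qed.

Lemma card_exits_le1 (T : finType) (e : rel T) (r : T) (N : {set T}) :
    (forall x, x != r -> exists u, e u x) ->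
    (forall u x, e u x -> x \in N -> u \in N) ->
    {in N, forall x y y', e x y -> e x y' -> y = y'} ->
  #|[set x in N | [exists y, e x y && (y \notin N)]]| <= 1.
Proof.
move=> has_pred N_pred N_fun; set out := [set x in N | _].
pose next x := odflt x [pick y | e x y].
have N_next : N :\ r \subset next @: (N :\: out).
  apply/subsetP => x; rewrite !inE => /andP [xr xN].
  have [u eux] := has_pred x xr; have uN := N_pred _ _ eux xN.
  have next_u : next u = x.
    by rewrite /next; case: pickP => [y euy | /(_ x)]; [exact: N_fun euy eux | rewrite eux].
  apply/imsetP; exists u => //; rewrite !inE uN andbT /=.
  by apply/existsP => -[y /andP [euy]]; rewrite (N_fun u uN _ _ euy eux) xN.
have := leq_trans (subset_leq_card N_next) (leq_imset_card _ _).
have := cardsID out N; rewrite (setIidPr _); last by apply/subsetP => x; rewrite inE => /andP [].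
have := cardsD1 r N; lia.
Qed.

Section FixedPoints.

Variables (S : finType) (e : rel S) (s0 : S).
Hypothesis reach : forall s, connect e s0 s.

Lemma reach_pred x : x != s0 -> exists u, e u x.
Proof.
case/connectP: (reach x) => p; case/lastP: p => [|p y] /=; first by move=> _ ->; rewrite eqxx.
by rewrite rcons_path last_rcons => /andP [_ ey] -> _; exists (last s0 p).
Qed.

Variable sigma : {perm S}.
Hypotheses (aut : graph_aut e sigma)
  (fix_succ : forall s t, e s t -> sigma s = s -> sigma t = t)
  (fix_branch : forall s, 1 < #|succs e s| -> sigma s = s).

Lemma graph_aut_fixpoint_eq1 b : sigma b = b -> sigma = 1%g.
Proof.
move=> fix_b; apply/permP => z; rewrite perm1; apply/eqP; apply: contraT => move_z.
pose N := [set x | sigma x != x].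
have N_pred u x : e u x -> x \in N -> u \in N.
  by rewrite !inE => eux; apply: contra => /eqP /(fix_succ eux) ->.
have N_fun : {in N, forall x y y', e x y -> e x y' -> y = y'}.
  move=> x; rewrite inE => move_x y y' exy exy'.
  have /card_le1_eqP : #|succs e x| <= 1.
    by rewrite leqNgt; apply: contra move_x => /fix_branch ->.
  by apply; rewrite inE.
have s0N : s0 \in N.
  apply: contraT => fix_s0.
  have zNC : z \notin [predC N] by rewrite !inE negbK.
  have [u [v []]] := connect_exit (reach z) fix_s0 zNC.
  by rewrite !inE !negbK => /eqP fix_u /negP move_v /fix_succ /(_ fix_u) /eqP.
have bN : b \notin N by rewrite inE fix_b eqxx.
have [x [y [xN yN exy]]] := connect_exit (reach b) s0N bN.
pose out := [set x in N | [exists y, e x y && (y \notin N)]].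
have /card_le1_eqP out_le1 : #|out| <= 1 := card_exits_le1 reach_pred N_pred N_fun.
have fix_y : sigma y = y by apply/eqP; rewrite inE negbK in yN.
have sxN : sigma x \in N by move: xN; rewrite !inE (inj_eq perm_inj).
have x_out : x \in out by rewrite inE xN; apply/existsP; exists y; rewrite exy.
have sx_out : sigma x \in out.
  by rewrite inE sxN; apply/existsP; exists y; rewrite -{1}fix_y -aut exy.
by move: xN; rewrite inE -(out_le1 _ _ sx_out x_out) eqxx.
Qed.

End FixedPoints.

Theorem mainTheorem15 (S : finType) (e : rel S) (s0 : S)
  (reach : forall s : S, connect e s0 s) :
  ((forall sigma : {perm S}, graph_aut e sigma -> in_ker_phi e sigma -> sigma = 1%g)
   \/ (forall sigma : {perm S}, graph_aut e sigma -> in_ker_phi e sigma))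
  /\ ((exists s : S, 2 <= #|succs e s|) ->
      forall sigma : {perm S}, graph_aut e sigma -> in_ker_phi e sigma -> sigma = 1%g)
  /\ ((forall s : S, #|succs e s| <= 1) ->
      forall sigma : {perm S}, graph_aut e sigma -> in_ker_phi e sigma).
Proof.
have trivial_ker : (exists s, 1 < #|succs e s|) ->
    forall sigma, graph_aut e sigma -> in_ker_phi e sigma -> sigma = 1%g.
  move=> [b branch_b] sigma aut ker.
  have fix_branch := ker_phi_fix_branch ker aut.
  apply: (graph_aut_fixpoint_eq1 reach aut (ker_phi_fix_succ ker) fix_branch).
  exact: fix_branch branch_b.
split; last by split; [exact: trivial_ker | exact: graph_aut_in_ker_phi].
have [/existsP branching | /existsPn nonbranching] := boolP [exists s, 1 < #|succs e s|].
  by left; apply: trivial_ker.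
by right; apply: graph_aut_in_ker_phi => s; rewrite leqNgt nonbranching.
Qed.
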